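(* Let $\beta\subset\mathcal B$. Sending a point $N\in C_\beta^M$ to the function $(i,j)\mapsto w_{i,j}$ on $\mathrm{Rel}^2$, where $(w_{i,j})$ is the matrix representation of $N$ in $\beta$-normal form, gives a bijection between the points of $C_\beta^M$ and the total evaluations in $\mathrm{Ev}(f_\beta)$. In particular, if the $\beta$-state is contradictory (i.e. $\mathrm{Ev}(f_\beta)=\emptyset$), then $C_\beta^M$ is empty.
   Context: Let $Q$ be a quiver with finite vertex set $Q_0$ and finite arrow set $Q_1$, and $M$ a finite-dimensional complex representation of $Q$. An ordered basis of $M$ is a set $\mathcal B=\bigcup_{p\in Q_0}\mathcal B_p$, $\mathcal B_p$ a basis of $M_p$, with a total order on $\mathcal B$. For $v:p\to q$ and $i\in\mathcal B_p$ write $M_v(i)=\sum_{j\in\mathcal B_q}\mu_{v,i,j}\,j$. The coefficient quiver $\Gamma$ has vertex set $\mathcal B$ and an arrow $(v,i,j)$ from $i$ to $j$ whenever $v:p\to q$, $i\in\mathcal B_p$, $j\in\mathcal B_q$, $\mu_{v,i,j}\ne0$; $F:\Gamma\to Q$ sends $i\in\mathcal B_p$ to $p$ and $(v,i,j)$ to $v$. Schubert cells: via $\mathcal B$ identify $M$ with $\mathbb C^d$, $d=\dim M$, and a subrepresentation $N$ with the subspace $\bigoplus_pN_p$. For $\beta\subset\mathcal B$, $|\beta|=e$, and an $e$-dimensional subspace $V$ spanned by the columns of a matrix $w$, $\Delta_\beta(V)$ is the minor of $w$ with rows $\beta$. For $\beta=\{i_1<\dots<i_e\}$, $\beta'=\{j_1<\dots<j_e\}$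 set $\beta\le\beta'$ iff $i_l\le j_l$ for all $l$. $C_\beta(d)$ is the set of $e$-dimensional $V$ with $\Delta_\beta(V)\neq0$ and $\Delta_{\beta'}(V)=0$ for all $\beta'>\beta$, and $C_\beta^M$ is the set of subrepresentations $N$ of $M$ (as subspaces of dimension $|\beta|$) lying in $C_\beta(d)$. A matrix representation of $N\in C_\beta^M$ is a matrix $w=(w_{i,j})_{i,j\in\mathcal B}$ such that for each $p$ the columns $(w_{i,j})_{i\in\mathcal B_p}$, $j\in\beta\cap\mathcal B_p$, form a basis of $N_p$ and $w_{i,j}=0$ if $j\notin\beta$ or $F(i)\ne F(j)$. It is in $\beta$-normal form if $w_{i,i}=1$ for $i\in\beta$; $w_{i,j}=0$ for $i,j\in\beta$, $i\ne j$; $w_{i,j}=0$ for $j\in\beta$, $j<i$; $w_{i,j}=0$ for $j\notin\beta$; $w_{i,j}=0$ if $j\in\beta$ and $F(i)\neq F(j)$. Every $N\in C_\beta^M$ has a unique matrix representation in $\beta$-normal form. Schubert system: for $v:p\to q$, $s\in F^{-1}(p)$, $t\in F^{-1}(q)$ let $E(v,t,s)=\sum_{(v,s',t')\in\Gamma_1}\mu_{v,s',t'}w_{t,t'}w_{s',s}-\sum_{(v,s',t)\in\Gamma_1}\mu_{v,s',t}w_{s',s}$. $\mathrm{Rel}^2=\{(i,j):F(i)=F(j), i\le j\}$; $\mathrm{Rel}^3$ = set of such $(v,t,s)$ for which some $(v,s',t')\in\Gamma_1$ has $s\ge s'$, $t\le t'$. $E(v,t,s)$ is regarded as a polynomial in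 $w_{i,j}$, $(i,j)\in\mathrm{Rel}^2$ (other variables set to $0$). The Schubert system $\Sigma$ is the graph on $\mathrm{Rel}^2\sqcup\mathrm{Rel}^3$ with an edge $\{(i,j),(v,t,s)\}$ iff $w_{i,j}$ occurs in $E(v,t,s)$, with links $\lambda=((v,t,s),S)$, $S\subset\mathrm{Rel}^2$, whenever $\prod_{(i,j)\in S}w_{i,j}$ occurs in $E(v,t,s)$ with nonzero coefficient $\mu_\lambda$. A partial evaluation is a partial function $\mathrm{ev}:\mathrm{Rel}^2\dashrightarrow\mathbb C$ such that for every $(v,t,s)\in\mathrm{Rel}^3$ and every neighbour $(k,l)$ of it in $\Sigma$: if all other neighbours of $(v,t,s)$ are in the domain, then $(k,l)$ is in the domain and $\sum_{\lambda=((v,t,s),S)}\mu_\lambda\prod_{(i,j)\in S}\mathrm{ev}(i,j)=0$; it is total if its domain is $\mathrm{Rel}^2$. For $\beta\subset\mathcal B$, $f_\beta$ is the partial function on $\mathrm{Rel}^2$ with $f_\beta(i,j)=1$ if $i=j\in\beta$, $f_\beta(i,j)=0$ if $i\in\beta$ and $i\ne j$, $f_\beta(i,j)=0$ if $j\notin\beta$, undefined otherwise; $\mathrm{Ev}(f_\beta)$ is the set of partial evaluations extending $f_\beta$. The $\beta$-state is called contradictory if $\mathrm{Ev}(f_\beta)$ is empty. *)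

From HB Require Import structures.
From mathcomp Require Import all_boot all_order all_algebra.
From mathcomp Require Import mpoly.
Unset Printing Implicit Defensive.
Import Order.TTheory GRing.Theory.
Local Open Scope ring_scope.

(* Conventions:
   - the quiver Q has vertex type Q0 and arrow type Q1 (finite types),
     with source/target maps src tgt : Q1 -> Q0;
   - the ordered basis B of M is identified with 'I_d (d = dim M), ordered
     as the ordinals; F : 'I_d -> Q0 sends a basis element to its vertex;
   - mu v i j is the coefficient mu_{v,i,j} of j in M_v(i) (only used when
     F i = src v and F j = tgt v);
   - K is the ground field (the paper takes K = C);
   - M is identified with K^d, realised as row vectors 'rV[K]_d. *)

Section Schubert.
Variables (K : fieldType) (Q0 Q1 : finType) (src tgt : Q1 -> Q0) (d : nat)
  (F : 'I_d -> Q0) (mu : Q1 -> 'I_d -> 'I_d -> K).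

Definition gam (v : Q1) (i j : 'I_d) : bool :=
  [&& F i == src v, F j == tgt v & mu v i j != 0].

(* the linear map M_v : K^d -> K^d, row-vector convention x |-> x *m Mv v *)
Definition Mv (v : Q1) : 'M[K]_d :=
  \matrix_(i, j) (if (F i == src v) && (F j == tgt v) then mu v i j else 0).

Definition Esp (p : Q0) : {vspace 'rV[K]_d} :=
  <<[seq delta_mx (0 : 'I_1)%R i | i <- enum 'I_d & F i == p]>>%VS.

(* V (a subspace of K^d) is (the image of) a subrepresentation N of M:
   V = (+)_p N_p with N_p = V cap M_p, and M_v(N_p) subset N_q. *)
Definition is_subrep (V : {vspace 'rV[K]_d}) : Prop :=
  (V = \sum_(p : Q0) (V :&: Esp p))%VS /\
  forall v : Q1, (linfun (mulmxr (Mv v)) @: (V :&: Esp (src v)) <= V)%VS.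

(* Pluecker coordinate / minor Delta_beta(V): the minor with columns beta
   (increasingly ordered) of the matrix whose rows are a basis of V
   (rows vs columns is the transposed convention of the paper). *)
Definition minor (V : {vspace 'rV[K]_d}) (b : {set 'I_d}) : K :=
  \det (\matrix_(a < #|b|, c < #|b|) (nth 0 (vbasis V) a) 0 (enum_val c)).

Definition sq (b : {set 'I_d}) : seq nat := [seq val x | x <- enum b].

Definition set_le (b b' : {set 'I_d}) : bool :=
  (#|b| == #|b'|) &&
  all (fun l => nth 0%N (sq b) l <= nth 0%N (sq b') l)%N (iota 0 #|b|).

Definition set_lt (b b' : {set 'I_d}) : bool := set_le b b' && (b != b').

Definition in_cell (b : {set 'I_d}) (V : {vspace 'rV[K]_d}) : Prop :=
  [/\ \dim V = #|b|, minor V b != 0 &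
      forall b' : {set 'I_d}, set_lt b b' -> minor V b' = 0].

Definition in_CM (b : {set 'I_d}) (V : {vspace 'rV[K]_d}) : Prop :=
  is_subrep V /\ in_cell b V.

Definition colv (w : 'M[K]_d) (j : 'I_d) : 'rV[K]_d := \row_i w i j.

Definition matrix_rep (b : {set 'I_d}) (V : {vspace 'rV[K]_d}) (w : 'M[K]_d)
  : Prop :=
  (forall p : Q0,
      basis_of (V :&: Esp p) [seq colv w j | j <- enum b & F j == p]) /\
  (forall i j : 'I_d, (j \notin b) || (F i != F j) -> w i j = 0).

Definition normal_form (b : {set 'I_d}) (V : {vspace 'rV[K]_d}) (w : 'M[K]_d)
  : Prop :=
  matrix_rep b V w /\
  [/\ forall i : 'I_d, i \in b -> w i i = 1,
      forall i j : 'I_d, i \in b -> j \in b -> i != j -> w i j = 0,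
      forall i j : 'I_d, j \in b -> (j < i)%N -> w i j = 0,
      forall i j : 'I_d, j \notin b -> w i j = 0 &
      forall i j : 'I_d, j \in b -> F i != F j -> w i j = 0].

Definition rel2b (ij : 'I_d * 'I_d) : bool := (F ij.1 == F ij.2) && (ij.1 <= ij.2)%N.
Definition rel2 := {ij : 'I_d * 'I_d | rel2b ij}.
HB.instance Definition _ := Finite.on rel2.

Definition nvar := #|{: rel2}|.

(* the variable w_{i,j} (set to 0 if (i,j) is not in Rel^2) *)
Definition wvar (i j : 'I_d) : {mpoly K[nvar]} :=
  match insub (i, j) : option rel2 with
  | Some k => 'X_(enum_rank k)
  | None => 0
  end.

Definition Epoly (v : Q1) (t s : 'I_d) : {mpoly K[nvar]} :=
  \sum_(s' : 'I_d) \sum_(t' : 'I_d)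
     (if gam v s' t' then mu v s' t' *: (wvar t t' * wvar s' s) else 0)
  - \sum_(s' : 'I_d) (if gam v s' t then mu v s' t *: wvar s' s else 0).

Definition rel3 (v : Q1) (t s : 'I_d) : bool :=
  [&& F s == src v, F t == tgt v &
      [exists s' : 'I_d, exists t' : 'I_d,
         [&& gam v s' t', (s' <= s)%N & (t <= t')%N]]].

(* (k,l) in Rel^2 is a neighbour of (v,t,s) in Sigma: w_{k,l} occurs in E *)
Definition nbr (v : Q1) (t s : 'I_d) (k : rel2) : bool :=
  has (fun m : 'X_{1..nvar} => (0 < m (enum_rank k))%N) (msupp (Epoly v t s)).

(* partial evaluations Rel^2 -|-> K; the sum over the links of (v,t,s)
   evaluated at ev is the value of E(v,t,s) at ev (variables outside the
   domain do not occur when all neighbours are in the domain). *)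
Definition eval_at (ev : {ffun rel2 -> option K}) : 'I_nvar -> K :=
  fun x => odflt 0 (ev (enum_val x)).

Definition partial_eval (ev : {ffun rel2 -> option K}) : Prop :=
  forall (v : Q1) (t s : 'I_d), rel3 v t s ->
  forall k : rel2, nbr v t s k ->
    (forall k' : rel2, nbr v t s k' -> k' != k -> ev k' != None) ->
    ev k != None /\ (Epoly v t s).@[eval_at ev] = 0.

Definition total_ev (ev : {ffun rel2 -> option K}) : Prop :=
  forall k : rel2, ev k != None.

Definition f_beta (b : {set 'I_d}) (k : rel2) : option K :=
  let i := (val k).1 in let j := (val k).2 in
  if (i == j) && (i \in b) then Some 1
  else if (i \in b) && (i != j) then Some 0
  else if j \notin b then Some 0
  else None.

Definition in_Ev (b : {set 'I_d}) (ev : {ffun rel2 -> option K}) : Prop :=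
  partial_eval ev /\ forall k c, f_beta b k = Some c -> ev k = Some c.

End Schubert.

From HB Require Import structures.
From mathcomp Require Import all_boot all_order all_algebra.
From mathcomp Require Import mpoly perm ring.
From Stdlib Require Import ProofIrrelevance ClassicalEpsilon.

(* A point N of C_beta^M is determined by its beta-normal form w, whose columns
   at beta are the vectors of N with unit beta-coordinates: they exist because
   Delta_beta(N) <> 0, lie at single vertices because N is a subrepresentation,
   and w_ij = 0 for j in beta, j < i, since otherwise the minor of N at
   beta - j + i > beta would not vanish.  With y = M_v(w_s), the value of
   E(v,t,s) at w is the t-th coordinate of y w^T - y, the defect of y from the
   vector of the column span with the same beta-coordinates; it vanishes as N
   is closed under M_v.  Conversely, the matrix of a total evaluation in
   Ev(f_beta) is the identity on beta and triangular, and E(v,t,s) vanishes at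
   it (on Rel^3 by definition, off Rel^3 by triangularity), so its column span
   is a subrepresentation; triangularity also kills every minor at beta' > beta. *)

Set Implicit Arguments. Unset Strict Implicit. Unset Printing Implicit Defensive.
Import GRing.Theory.
Local Open Scope ring_scope.

Section CoordinateMinors.
Variables (K : fieldType) (d : nat).
Local Notation rv := 'rV[K]_d.

Lemma sum_row_entry (I : Type) (r : seq I) (P : pred I) (c : I -> K)
    (X : I -> rv) i :
  (\sum_(a <- r | P a) c a *: X a) 0 i = \sum_(a <- r | P a) c a * X a 0 i.
Proof. by rewrite summxE; apply: eq_bigr => a _; rewrite mxE. Qed.

Lemma span_entry_eq0 (X : seq rv) i : (forall x, x \in X -> x 0 i = 0) ->
  forall y, y \in <<X>>%VS -> y 0 i = 0.
Proof.
move=> X0 y /(@coord_span _ _ _ (in_tuple X)) ->; rewrite sum_row_entry.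
by apply: big1 => a _; rewrite X0 ?mulr0 ?mem_nth.
Qed.

Definition coord_injective (V : {vspace rv}) (b : {set 'I_d}) :=
  forall x, x \in V -> (forall k, k \in b -> x 0 k = 0) -> x = 0.

Definition coord_mx (b : {set 'I_d}) (X : #|b|.-tuple rv) : 'M[K]_#|b| :=
  \matrix_(a, c) X`_a 0 (enum_val c).

Lemma coord_mx_unitP (V : {vspace rv}) (b : {set 'I_d}) (X : #|b|.-tuple rv) :
  free X -> <<X>>%VS = V ->
  reflect (coord_injective V b) (coord_mx X \in unitmx).
Proof.
move=> freeX spanX; rewrite unitmxE unitfE; apply: (iffP idP).
- move=> det_neq0 x xV xb.
  have xE := coord_span (X := X) (v := x); rewrite spanX in xE.
  have {}xE := xE xV; pose u := \row_a coord X a x.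
  have u0 : u = 0.
    apply/eqP/negPn/negP => u_neq0; move/negP: det_neq0; apply; apply/det0P.
    exists u => //; apply/rowP => c; rewrite !mxE -[RHS](xb _ (enum_valP c)).
    by rewrite [in RHS]xE sum_row_entry; apply: eq_bigr => a _; rewrite !mxE.
  rewrite xE; apply: big1 => a _.
  by have := congr1 (fun y : 'rV_#|b| => y 0 a) u0; rewrite !mxE => ->; rewrite scale0r.
- move=> injV; apply/negP => /det0P [u u_neq0 uX0].
  pose x := \sum_(a < #|b|) u 0 a *: X`_a.
  have x0 : x = 0.
    apply: injV => [|k kb].
      rewrite -spanX; apply: rpred_sum => a _; apply/rpredZ/memv_span/mem_nth.
      by rewrite size_tuple.
    rewrite -(enum_rankK_in kb kb) sum_row_entry.
    have := congr1 (fun y : 'rV_#|b| => y 0 (enum_rank_in kb k)) uX0.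
    rewrite !mxE => uXk; rewrite -[RHS]uXk.
    by apply: eq_bigr => a _; rewrite !mxE.
  move/freeP: freeX => /(_ (fun a => u 0 a) x0) u_eq0.
  by move/eqP: u_neq0; apply; apply/rowP => a; rewrite u_eq0 mxE.
Qed.

Lemma minor_neq0P (V : {vspace rv}) (b : {set 'I_d}) : \dim V = #|b| ->
  reflect (coord_injective V b) (minor K d V b != 0).
Proof.
move=> dimV; pose X := tcast dimV (vbasis V).
have freeX : free X by rewrite val_tcast; exact: basis_free (vbasisP V).
have spanX : <<X>>%VS = V by rewrite val_tcast; exact: span_basis (vbasisP V).
have := coord_mx_unitP freeX spanX; rewrite unitmxE unitfE.
by rewrite /coord_mx /minor val_tcast.
Qed.

End CoordinateMinors.

Section ColumnSpace.
Variables (K : fieldType) (d : nat) (b : {set 'I_d}) (w : 'M[K]_d).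
Local Notation rv := 'rV[K]_d.
Local Notation colv := (colv K d).
Hypothesis w_id_b : forall i j, i \in b -> j \in b -> w i j = (i == j)%:R.

Lemma free_cols (s : seq 'I_d) : uniq s -> {subset s <= b} ->
  free [seq colv w j | j <- s].
Proof.
elim: s => [|j s IHs] /=; first by rewrite nil_free.
case/andP=> js s_uniq sb; rewrite free_cons IHs // => [|k ks]; last first.
  by apply: sb; rewrite inE ks orbT.
have jb : j \in b by apply: sb; rewrite inE eqxx.
rewrite andbT; apply/negP => /(span_entry_eq0 (i := j)) colj0.
suff: colv w j 0 j = 0 by rewrite mxE w_id_b // eqxx => /eqP; rewrite oner_eq0.
apply: colj0 => _ /mapP[k ks ->]; rewrite mxE w_id_b //.
  by case: eqP js => // ->; rewrite ks.
by apply: sb; rewrite inE ks orbT.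
Qed.

Definition colbasis : #|b|.-tuple rv := [tuple of [seq colv w j | j in b]].
Definition colspan := <<colbasis>>%VS.

Lemma colbasis_nth (a : 'I_#|b|) : colbasis`_a = colv w (enum_val a).
Proof. exact: nth_image. Qed.

Lemma free_colbasis : free colbasis.
Proof. by apply: free_cols; [exact: enum_uniq | move=> j; rewrite mem_enum]. Qed.

Lemma dim_colspan : \dim colspan = #|b|.
Proof. by have /eqP -> := free_colbasis; rewrite size_tuple. Qed.

Lemma col_in_colspan j : j \in b -> colv w j \in colspan.
Proof. by move=> jb; apply/memv_span/map_f; rewrite mem_enum. Qed.

Lemma colspan_coord_injective : coord_injective colspan b.
Proof.
apply/(coord_mx_unitP free_colbasis erefl); suff ->: coord_mx colbasis = 1%:M.
  exact: unitmx1.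
apply/matrixP => a c; rewrite !mxE colbasis_nth mxE.
by rewrite w_id_b ?enum_valP // (inj_eq enum_val_inj) eq_sym.
Qed.

Definition colproj (x : rv) := \sum_(j in b) x 0 j *: colv w j.

Lemma colproj_coord x k : k \in b -> colproj x 0 k = x 0 k.
Proof.
move=> kb; rewrite sum_row_entry (bigD1 k) //= mxE w_id_b // eqxx mulr1.
by rewrite big1 ?addr0 // => j /andP[jb jk]; rewrite mxE w_id_b // eq_sym (negbTE jk) mulr0.
Qed.

Lemma colproj_in (V : {vspace rv}) x : (forall j, j \in b -> colv w j \in V) ->
  colproj x \in V.
Proof. by move=> colsV; apply: rpred_sum => j jb; apply/rpredZ/colsV. Qed.

Lemma colproj_mulmx x : (forall i j, j \notin b -> w i j = 0) -> colproj x = x *m w^T.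
Proof.
move=> wb; apply/rowP => i; rewrite sum_row_entry !mxE [RHS](bigID (mem b)) /=.
rewrite [X in _ + X]big1 ?addr0 => [|j jb]; last by rewrite mxE wb ?mulr0.
by apply: eq_bigr => j _; rewrite !mxE.
Qed.

Section ContainingSpace.
Variable V : {vspace rv}.
Hypotheses (injV : coord_injective V b) (colsV : forall j, j \in b -> colv w j \in V).

Lemma colproj_id x : x \in V -> colproj x = x.
Proof.
move=> xV; apply/eqP; rewrite -subr_eq0; apply/eqP; apply: injV.
  by rewrite rpredB // colproj_in.
by move=> k kb; rewrite !mxE colproj_coord // subrr.
Qed.

Lemma colspan_eq : V = colspan.
Proof.
apply/eqP; rewrite eqEsubv; apply/andP; split.
  by apply/subvP => x xV; rewrite -(colproj_id xV); apply/colproj_in/col_in_colspan.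
by apply/span_subvP => _ /mapP[j jb ->]; apply: colsV; rewrite -mem_enum.
Qed.

End ContainingSpace.

End ColumnSpace.

Section SubsetOrder.
Variable d : nat.
Implicit Types b : {set 'I_d}.

Lemma size_sq b : size (sq d b) = #|b|.
Proof. by rewrite size_map cardE. Qed.

Lemma sq_nth b (c : 'I_#|b|) : nth 0 (sq d b) c = enum_val c.
Proof. by rewrite (nth_map (enum_val c)) -?cardE // -enum_val_nth. Qed.

Lemma sorted_sq b : sorted ltn (sq d b).
Proof.
rewrite /sq /enum_mem /= -enumT sorted_map; apply: sorted_filter.
  exact: ltn_trans.
by rewrite -sorted_map val_enum_ord iota_ltn_sorted.
Qed.

Lemma count_sq b x : count (fun n => n < x)%N (sq d b) = (\sum_(k in b) (k < x))%N.
Proof.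
rewrite count_map -big_enum /=.
by elim: (enum b) => [|k s IHs]; rewrite ?big_nil ?big_cons //= IHs.
Qed.

Lemma sorted_nth_ltE (s : seq nat) l x : sorted ltn s -> (l < size s)%N ->
  (nth 0 s l < x)%N = (l < count (fun n => n < x) s)%N.
Proof.
elim: s l => [|a s IHs] l //= s_sorted; rewrite ltnS => ls.
have a_lt : all (fun n => a < n)%N s by apply: order_path_min s_sorted; exact: ltn_trans.
case: (ltnP a x) => [ax | xa].
  by case: l ls => [|l] ls //=; rewrite add1n ltnS IHs ?(path_sorted s_sorted).
have -> : count (fun n => n < x)%N s = 0%N.
  apply/eqP; rewrite -leqn0 leqNgt -has_count; apply/hasPn => n /(allP a_lt) an.
  by rewrite -leqNgt; exact: leq_trans xa (ltnW an).
rewrite add0n ltn0; apply/negbTE; rewrite -leqNgt.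
case: l ls => [|l] ls //=; apply: leq_trans xa (ltnW _).
by apply/(allP a_lt)/mem_nth.
Qed.

Lemma set_lt_exchange b (j i : 'I_d) :
  j \in b -> i \notin b -> (j < i)%N -> set_lt d b (i |: (b :\ j)).
Proof.
move=> jb ib ji; set b' := i |: (b :\ j).
have ib' : i \notin b :\ j by rewrite inE negb_and ib orbT.
have card_b' : #|b'| = #|b| by rewrite cardsU1 ib' (cardsD1 j b) jb.
rewrite /set_lt /set_le card_b' eqxx /=; apply/andP; split; last first.
  by apply: contraNneq ib => ->; rewrite setU11.
have count_le x :
    (count (fun n => n < x)%N (sq d b') <= count (fun n => n < x)%N (sq d b))%N.
  rewrite !count_sq big_setU1 //= (big_setD1 j jb) /= leq_add2r.
  by case: (ltnP i x) => // ix; rewrite (ltn_trans ji ix).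
apply/allP => l; rewrite mem_iota add0n => /= lb; rewrite leqNgt.
apply/negP => lt_l; set x := nth 0 (sq d b) l.
have lt_b' : (l < count (fun n => n < x) (sq d b'))%N.
  by rewrite -sorted_nth_ltE ?sorted_sq // size_sq card_b'.
have := @sorted_nth_ltE (sq d b) l x (sorted_sq b).
rewrite size_sq ltnn => /(_ lb) /esym/negbT.
by rewrite -leqNgt => /(leq_trans (leq_trans lt_b' (count_le x))); rewrite ltnn.
Qed.

Lemma set_ltP b b' : set_lt d b b' ->
  [/\ #|b| = #|b'|,
      forall l, (l < #|b|)%N -> (nth 0 (sq d b) l <= nth 0 (sq d b') l)%N &
      exists2 l, (l < #|b|)%N & (nth 0 (sq d b) l < nth 0 (sq d b') l)%N].
Proof.
rewrite /set_lt /set_le => /andP[/andP[/eqP card_b /allP sq_le] bb'].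
have le l : (l < #|b|)%N -> (nth 0 (sq d b) l <= nth 0 (sq d b') l)%N.
  by move=> lb; apply: sq_le; rewrite mem_iota add0n.
split=> //.
case: (pickP (fun l : 'I_#|b| => nth 0 (sq d b) l < nth 0 (sq d b') l)%N) => [l | eq_sq].
  by exists l.
have {}eq_sq : sq d b = sq d b'.
  apply: (@eq_from_nth _ 0); first by rewrite !size_sq card_b.
  by rewrite size_sq => l lb; apply/eqP; rewrite eqn_leq le // leqNgt (eq_sq (Ordinal lb)).
case/negP: bb'; apply/eqP/setP => x; rewrite -[x \in b]mem_enum -[x \in b']mem_enum.
by have -> : enum b = enum b' by apply: (inj_map val_inj).
Qed.

End SubsetOrder.

(* A permutation avoiding the zero pattern would give sum s' <= sum s. *)
Lemma det_gale_eq0 (K : fieldType) m (A : 'M[K]_m) (s s' : seq nat) :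
  (forall l, (l < m)%N -> nth 0 s l <= nth 0 s' l)%N ->
  (exists2 l, (l < m)%N & (nth 0 s l < nth 0 s' l)%N) ->
  (forall a c : 'I_m, (nth 0 s a < nth 0 s' c)%N -> A a c = 0) -> \det A = 0.
Proof.
move=> le [l lm lt] A0; apply: big1 => sigma _.
case: (boolP [exists a : 'I_m, nth 0 s a < nth 0 s' (sigma a)]%N).
  by case/existsP=> a Ha; rewrite (bigD1 a) //= A0 // mul0r mulr0.
move/existsPn=> H.
suff: (\sum_(a < m) nth 0 s a < \sum_(a < m) nth 0 s a)%N by rewrite ltnn.
apply: (@leq_trans (\sum_(a < m) nth 0 s' a)).
  rewrite (bigD1 (Ordinal lm)) //= [X in (_ <= X)%N](bigD1 (Ordinal lm)) //=.
  by rewrite -addSn leq_add // leq_sum // => a _; apply: le.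
rewrite (reindex_inj (@perm_inj _ sigma)) /=; apply: leq_sum => a _.
by rewrite leqNgt H.
Qed.

Section Quiver.
Variables (K : fieldType) (Q0 Q1 : finType) (src tgt : Q1 -> Q0) (d : nat)
  (F : 'I_d -> Q0) (mu : Q1 -> 'I_d -> 'I_d -> K).
Local Notation rv := 'rV[K]_d.
Local Notation colv := (colv K d).
Local Notation Esp := (Esp K Q0 d F).
Local Notation Mv := (Mv K Q0 Q1 src tgt d F mu).
Local Notation is_subrep := (is_subrep K Q0 Q1 src tgt d F mu).
Local Notation in_cell := (in_cell K d).
Local Notation in_CM := (in_CM K Q0 Q1 src tgt d F mu).
Local Notation normal_form := (normal_form K Q0 d F).
Local Notation gam := (gam K Q0 Q1 src tgt d F mu).
Local Notation rel2b := (rel2b Q0 d F).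
Local Notation rel2 := (rel2 Q0 d F).
Local Notation wvar := (wvar K Q0 d F).
Local Notation Epoly := (Epoly K Q0 Q1 src tgt d F mu).
Local Notation rel3 := (rel3 K Q0 Q1 src tgt d F mu).
Local Notation nbr := (nbr K Q0 Q1 src tgt d F mu).
Local Notation eval_at := (eval_at K Q0 d F).
Local Notation partial_eval := (partial_eval K Q0 Q1 src tgt d F mu).
Local Notation total_ev := (total_ev K Q0 d F).
Local Notation in_Ev := (in_Ev K Q0 Q1 src tgt d F mu).
Local Notation f_beta := (f_beta K Q0 d F).
Implicit Types (b : {set 'I_d}) (V : {vspace rv}) (w : 'M[K]_d) (i j : 'I_d).

Lemma memv_EspP p (x : rv) : reflect (forall i, F i != p -> x 0 i = 0) (x \in Esp p).
Proof.
apply: (iffP idP) => [xE i Fi | x0].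
  apply: span_entry_eq0 xE => y /mapP[k]; rewrite mem_filter => /andP[/eqP Fk _] ->.
  by rewrite mxE (_ : i == k = false) ?andbF //; apply: contraNF Fi => /eqP->; rewrite Fk.
rewrite [x]row_sum_delta (bigID (fun i => F i == p)) /=.
rewrite [X in _ + X]big1 ?addr0 => [|i /x0 ->]; last by rewrite scale0r.
apply: rpred_sum => i Fi; apply/rpredZ/memv_span/map_f.
by rewrite mem_filter Fi mem_enum.
Qed.

Lemma cell_coord_injective b V : in_cell b V -> coord_injective V b.
Proof. by case=> dimV minor_neq0 _; apply/minor_neq0P. Qed.

Lemma cell_delta b V j : in_cell b V -> j \in b ->
  exists2 y, y \in V & forall k, k \in b -> y 0 k = (k == j)%:R.
Proof.
case=> dimV minor_neq0 _ jb; pose X := tcast dimV (vbasis V).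
have X_unit : coord_mx X \in unitmx by rewrite unitmxE unitfE /coord_mx val_tcast.
pose a := enum_rank_in jb j.
exists (\sum_c invmx (coord_mx X) a c *: X`_c).
  apply: rpred_sum => c _; apply/rpredZ; rewrite val_tcast.
  by apply/vbasis_mem/mem_nth; rewrite size_tuple dimV.
move=> k kb; pose c := enum_rank_in kb k.
have -> : (k == j) = (a == c) by rewrite -(inj_eq enum_val_inj) !enum_rankK_in // eq_sym.
have := congr1 (fun M : 'M_#|b| => M a c) (mulVmx X_unit); rewrite !mxE => <-.
rewrite -{1}(enum_rankK_in kb kb) sum_row_entry.
by apply: eq_bigr => c' _; rewrite !mxE.
Qed.

Lemma subrep_component V y p : is_subrep V -> y \in V ->
  exists2 z, z \in (V :&: Esp p)%VS & forall i, F i = p -> z 0 i = y 0 i.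
Proof.
case=> decomp _; rewrite {1}decomp => /memv_sumP[z zP ->].
exists (z p) => [|i Fi]; first exact: zP.
rewrite summxE (bigD1 p) //= big1 ?addr0 // => q qp.
by have /memv_capP[_ /memv_EspP->] := zP q isT; rewrite // Fi eq_sym.
Qed.

Lemma subrep_cell_delta b V j : in_CM b V -> j \in b ->
  exists y, [/\ y \in V, y \in Esp (F j) & forall k, k \in b -> y 0 k = (k == j)%:R].
Proof.
case=> subV cellV jb; have [y yV y_delta] := cell_delta cellV jb.
have [z /memv_capP[zV zE] zy] := subrep_component (F j) subV yV.
exists z; split=> // k kb; have [Fkj | Fkj] := eqVneq (F k) (F j).
  by rewrite zy // y_delta.
rewrite (memv_EspP _ _ zE) // (_ : k == j = false) //.
by apply: contraNF Fkj => /eqP->.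
Qed.

Lemma normal_form_intro b V w :
  coord_injective V b ->
  (forall j, j \in b -> colv w j \in V) ->
  (forall i j, i \in b -> j \in b -> w i j = (i == j)%:R) ->
  (forall i j : 'I_d, j \in b -> (j < i)%N -> w i j = 0) ->
  (forall i j, j \notin b -> w i j = 0) ->
  (forall i j, j \in b -> F i != F j -> w i j = 0) ->
  normal_form b V w.
Proof.
move=> injV colsV w_id_b lower wb wF; split; last first.
  split=> // [j jb | i j ib jb /negbTE ij]; by rewrite w_id_b ?eqxx ?ij.
split=> [p | i j /orP[jb | Fij]]; last 2 first.
- exact: wb.
- by case jb: (j \in b); [exact: wF | rewrite wb ?jb].
rewrite /basis_of (free_cols w_id_b (filter_uniq _ (enum_uniq b))) ?andbT; last first.
  by move=> j; rewrite mem_filter mem_enum => /andP[].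
rewrite eqEsubv; apply/andP; split.
  apply/span_subvP => y /mapP[j]; rewrite mem_filter mem_enum => /andP[/eqP Fj jb] ->.
  by rewrite memv_cap colsV //=; apply/memv_EspP => i Fi; rewrite mxE wF // Fj.
apply/subvP => x /memv_capP[xV xE]; rewrite -(colproj_id w_id_b injV colsV xV).
rewrite /colproj (bigID (fun j => F j == p)) /= [X in _ + X]big1 ?addr0; last first.
  by move=> j /andP[jb Fj]; rewrite (memv_EspP _ _ xE) ?scale0r.
apply: rpred_sum => j /andP[jb Fj]; apply/rpredZ/memv_span/map_f.
by rewrite mem_filter Fj mem_enum.
Qed.

(* If w i j were nonzero, V would also meet the coordinates outside
   b' = b - j + i trivially, so that the minor of V at b' > b would not vanish. *)
Lemma cell_col_lower b V w i j : in_cell b V ->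
  (forall i j, i \in b -> j \in b -> w i j = (i == j)%:R) ->
  (forall j, j \in b -> colv w j \in V) ->
  j \in b -> i \notin b -> (j < i)%N -> w i j = 0.
Proof.
move=> cellV w_id_b colsV jb ib ji; apply/eqP/negPn/negP => wij_neq0.
have b_lt := set_lt_exchange jb ib ji; have [card_b _ _] := set_ltP b_lt.
have injV := cell_coord_injective cellV; case: cellV => dimV _ minors0.
have : minor K d V (i |: (b :\ j)) != 0.
  apply/(minor_neq0P (etrans dimV card_b)) => x xV xb'.
  have xE : x = x 0 j *: colv w j.
    rewrite -{1}(colproj_id w_id_b injV colsV xV) /colproj (bigD1 j) //= big1 ?addr0 //.
    by move=> k /andP[kb kj]; rewrite xb' ?scale0r // !inE kj kb orbT.
  have : x 0 j * w i j = 0 by rewrite -(xb' i) ?setU11 // {2}xE !mxE.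
  by move/eqP; rewrite mulf_eq0 (negbTE wij_neq0) orbF => /eqP xj; rewrite xE xj scale0r.
by rewrite minors0 ?eqxx.
Qed.

Lemma normal_form_exists b V : in_CM b V -> exists w, normal_form b V w.
Proof.
move=> CMV; have injV := cell_coord_injective CMV.2.
have /fin_all_exists[y yP] : forall j, exists y : rv, j \in b ->
    [/\ y \in V, y \in Esp (F j) & forall k, k \in b -> y 0 k = (k == j)%:R].
  move=> j; case jb: (j \in b); last by exists 0.
  by have [y yP] := subrep_cell_delta CMV jb; exists y.
pose w : 'M[K]_d := \matrix_(i, j) if j \in b then y j 0 i else 0.
have colsV j : j \in b -> colv w j \in V.
  move=> jb; have [yV _ _] := yP j jb; rewrite (_ : colv w j = y j) //.
  by apply/rowP => i; rewrite !mxE jb.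
have w_id_b i j : i \in b -> j \in b -> w i j = (i == j)%:R.
  by move=> ib jb; rewrite mxE jb; have [_ _ ->] := yP j jb.
exists w; apply: normal_form_intro => // [i j jb ji | i j /negbTE jb | i j jb Fij].
- case ib: (i \in b); last exact: cell_col_lower CMV.2 w_id_b colsV jb (negbT ib) ji.
  by rewrite w_id_b // -val_eqE /= (gtn_eqF ji).
- by rewrite mxE jb.
- by have [_ yE _] := yP j jb; rewrite mxE jb (memv_EspP _ _ yE).
Qed.

Lemma normal_form_id_b b V w : normal_form b V w ->
  forall i j, i \in b -> j \in b -> w i j = (i == j)%:R.
Proof.
case=> _ [w1 w0 _ _ _] i j ib jb.
by have [->|ij] := eqVneq i j; [rewrite w1 | rewrite w0].
Qed.

Lemma normal_form_col b V w j : normal_form b V w -> colv w j \in (V :&: Esp (F j))%VS.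
Proof.
case=> [[bas _] [_ _ _ wb _]]; case jb: (j \in b); last first.
  by rewrite (_ : colv w j = 0) ?mem0v //; apply/rowP => i; rewrite !mxE wb ?jb.
have /andP[/eqP <- _] := bas (F j); apply/memv_span/map_f.
by rewrite mem_filter eqxx mem_enum.
Qed.

Lemma normal_form_col_in b V w j : normal_form b V w -> colv w j \in V.
Proof. by move/(normal_form_col j)/memv_capP=> []. Qed.

Lemma normal_form_unique b V w w' : coord_injective V b ->
  normal_form b V w -> normal_form b V w' -> w = w'.
Proof.
move=> injV nf nf'; apply/matrixP => i j.
have [_ [_ _ _ wb _]] := nf; have [_ [_ _ _ wb' _]] := nf'.
case jb: (j \in b); last by rewrite wb ?wb' ?jb.
suff /rowP/(_ i) : colv w j - colv w' j = 0.
  by rewrite !mxE => /eqP; rewrite subr_eq0 => /eqP.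
apply: injV => [|k kb].
  by rewrite rpredB ?(normal_form_col_in j nf) ?(normal_form_col_in j nf').
by rewrite !mxE (normal_form_id_b nf) ?(normal_form_id_b nf') ?subrr.
Qed.

Definition E_at (w : 'M[K]_d) v t s :=
  \sum_(s' : 'I_d) \sum_(t' : 'I_d)
     (if gam v s' t' then mu v s' t' * (w t t' * w s' s) else 0)
  - \sum_(s' : 'I_d) (if gam v s' t then mu v s' t * w s' s else 0).

Lemma if_gam v s' t' (x : K) : (if gam v s' t' then mu v s' t' * x else 0) = Mv v s' t' * x.
Proof.
rewrite /gam mxE; case: (F s' == src v); case: (F t' == tgt v); rewrite /= ?mul0r //.
by case: eqP => [->|]; rewrite ?mul0r.
Qed.

Lemma E_at_mulmx w v t s :
  E_at w v t s = (colv w s *m Mv v *m w^T - colv w s *m Mv v) 0 t.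
Proof.
rewrite /E_at !mxE; congr (_ - _).
  rewrite (exchange_big _ _ (index_enum _)); apply: eq_bigr => t' _.
  rewrite !mxE mulr_suml; apply: eq_bigr => s' _.
  by rewrite if_gam !mxE; ring.
by apply: eq_bigr => s' _; rewrite if_gam !mxE mulrC.
Qed.

Lemma not_rel3_gam v t s s' t' : F s = src v -> ~~ rel3 v t s -> gam v s' t' ->
  ~~ rel2b (t, t') || ~~ rel2b (s', s).
Proof.
move=> Fs r3 g; apply: contraNT r3; rewrite negb_or !negbK.
move=> /andP[/andP[/eqP Ftt' tt'] /andP[_ s's]].
apply/and3P; split; first by rewrite Fs.
  by rewrite Ftt'; case/and3P: g.
by apply/existsP; exists s'; apply/existsP; exists t'; rewrite g s's tt'.
Qed.

Lemma E_at_not_rel3 w v t s : (forall i j, ~~ rel2b (i, j) -> w i j = 0) ->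
  F s = src v -> ~~ rel3 v t s -> E_at w v t s = 0.
Proof.
move=> w0 Fs r3; rewrite /E_at big1 ?[X in _ - X]big1 ?subrr // => s' _.
  case: ifP => // g; have := not_rel3_gam Fs r3 g.
  by rewrite /rel2b /= eqxx leqnn /= => /w0->; rewrite mulr0.
apply: big1 => t' _; case: ifP => // g.
by case/orP: (not_rel3_gam Fs r3 g) => /w0->; rewrite ?mul0r ?mulr0.
Qed.

Definition mx_of_ev (ev : {ffun rel2 -> option K}) : 'M[K]_d :=
  \matrix_(i, j) odflt 0 (obind ev (insub (i, j))).

Definition ev_of_mx (w : 'M[K]_d) : {ffun rel2 -> option K} :=
  [ffun k => Some (w (val k).1 (val k).2)].

Lemma mx_of_evE ev (k : rel2) : mx_of_ev ev (val k).1 (val k).2 = odflt 0 (ev k).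
Proof. by rewrite mxE -surjective_pairing valK. Qed.

Lemma mx_of_ev_out ev i j : ~~ rel2b (i, j) -> mx_of_ev ev i j = 0.
Proof. by move=> ij; rewrite mxE insubN. Qed.

Lemma wvar_eval ev i j : (wvar i j).@[eval_at ev] = mx_of_ev ev i j.
Proof.
rewrite /wvar mxE; case: insub => [k|] /=; last by rewrite meval0.
by rewrite mevalXU /eval_at enum_rankK.
Qed.

Lemma Epoly_eval ev v t s : (Epoly v t s).@[eval_at ev] = E_at (mx_of_ev ev) v t s.
Proof.
rewrite /Epoly /E_at mevalB; congr (_ - _); rewrite raddf_sum; apply: eq_bigr => s' _ /=.
  rewrite raddf_sum; apply: eq_bigr => t' _ /=.
  by case: (gam v s' t'); rewrite ?meval0 // mevalZ rmorphM /= !wvar_eval.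
by case: (gam v s' t); rewrite ?meval0 // mevalZ wvar_eval.
Qed.

Lemma meval_const n (p : {mpoly K[n]}) :
  (forall m (i : 'I_n), m \in msupp p -> m i = 0%N) -> forall x y, p.@[x] = p.@[y].
Proof.
move=> p_const x y; rewrite !mevalE; apply: eq_big_seq => m mp.
by rewrite !big1 // => i _; rewrite p_const ?expr0.
Qed.

(* When E(v,t,s) has no neighbours it is a constant, namely its value at 0. *)
Lemma total_eval_Epoly ev v t s : partial_eval ev -> total_ev ev -> rel3 v t s ->
  (Epoly v t s).@[eval_at ev] = 0.
Proof.
move=> pev tot r3.
have [/existsP[k nk] | /existsPn no_nbr] := boolP [exists k, nbr v t s k].
  by have [_ ->] := pev v t s r3 k nk (fun k' _ _ => tot k').
rewrite (@meval_const _ _ _ _ (eval_at [ffun=> None])) => [|m i mE]; last first.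
  by move/hasPn: (no_nbr (enum_val i)) => /(_ m mE); rewrite enum_valK lt0n negbK => /eqP.
rewrite Epoly_eval (_ : mx_of_ev _ = 0) ?E_at_mulmx; last first.
  by apply/matrixP => i j; rewrite !mxE; case: insub => //= k; rewrite ffunE.
rewrite trmx0 mulmx0 sub0r (_ : colv 0 s = 0) ?mul0mx ?oppr0 ?mxE //.
by apply/rowP => i; rewrite !mxE.
Qed.

Lemma normal_form_rel2 b V w i j : normal_form b V w -> ~~ rel2b (i, j) -> w i j = 0.
Proof.
case=> _ [_ _ lower wb wF]; rewrite /rel2b negb_and -ltnNge => /orP[Fij | ji].
  by case jb: (j \in b); [exact: wF | rewrite wb ?jb].
by case jb: (j \in b); [exact: lower | rewrite wb ?jb].
Qed.

Lemma ev_of_mxK w : (forall i j, ~~ rel2b (i, j) -> w i j = 0) -> mx_of_ev (ev_of_mx w) = w.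
Proof.
move=> w0; apply/matrixP => i j; rewrite mxE; case: insubP => [k _ kE | /w0 //].
by rewrite /= ffunE kE.
Qed.

Lemma normal_form_E_at b V w v t s : is_subrep V -> coord_injective V b ->
  normal_form b V w -> F s = src v -> E_at w v t s = 0.
Proof.
move=> [_ closedV] injV nf Fs; have [_ [_ _ _ wb _]] := nf.
have yV : colv w s *m Mv v \in V.
  apply: (subvP (closedV v)); rewrite -Fs.
  by have := memv_img (linfun (mulmxr (Mv v))) (normal_form_col s nf); rewrite lfunE.
rewrite E_at_mulmx -(colproj_mulmx _ wb).
rewrite (colproj_id (normal_form_id_b nf) injV _ yV) ?subrr ?mxE //.
by move=> j _; apply: normal_form_col_in nf.
Qed.

Lemma ev_of_mx_total w : total_ev (ev_of_mx w).
Proof. by move=> k; rewrite ffunE. Qed.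

Lemma normal_form_in_Ev b V w : in_CM b V -> normal_form b V w -> in_Ev b (ev_of_mx w).
Proof.
case=> subV cellV nf; have [_ [w1 w0 _ wb _]] := nf; split.
  move=> v t s r3 k _ _; split; first by rewrite ffunE.
  rewrite Epoly_eval ev_of_mxK => [|i j]; last exact: normal_form_rel2 nf.
  case/and3P: r3 => /eqP Fs _ _.
  exact: normal_form_E_at (cell_coord_injective cellV) nf Fs.
move=> k c; rewrite /f_beta ffunE.
case: ifP => [/andP[/eqP <- ib] [<-] | _]; first by rewrite w1.
case: ifP => [/andP[ib ij] [<-] | _].
  by case jb: ((val k).2 \in b); [rewrite w0 | rewrite wb ?jb].
by case: ifP => // jb [<-]; rewrite wb.
Qed.

Section ColumnSpaceCell.
Variables (b : {set 'I_d}) (w : 'M[K]_d).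
Hypotheses (w_id_b : forall i j, i \in b -> j \in b -> w i j = (i == j)%:R)
  (lower : forall i j : 'I_d, j \in b -> (j < i)%N -> w i j = 0)
  (wF : forall i j, j \in b -> F i != F j -> w i j = 0).

Lemma colspan_in_cell : in_cell b (colspan b w).
Proof.
have dimV := dim_colspan w_id_b; split=> //.
  exact/(minor_neq0P dimV)/colspan_coord_injective.
move=> b' lt_b'; have [card_b le [l lb lt]] := set_ltP lt_b'.
apply/eqP/negPn/negP => /(minor_neq0P (etrans dimV card_b)) injb'.
pose X := tcast card_b (colbasis b w).
have freeX : free X by rewrite val_tcast free_colbasis.
have spanX : <<X>>%VS = colspan b w by rewrite val_tcast.
have : coord_mx X \in unitmx by apply/(coord_mx_unitP freeX spanX).
rewrite unitmxE unitfE; apply/negP/negPn/eqP.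
apply: (@det_gale_eq0 _ _ _ (sq d b) (sq d b')) => [l' | | a c].
- by rewrite -card_b; apply: le.
- by exists l; rewrite -?card_b.
have ab : (a < #|b|)%N by rewrite card_b.
rewrite mxE val_tcast (_ : _`_a = (colbasis b w)`_(Ordinal ab)) // colbasis_nth mxE.
by rewrite (sq_nth (Ordinal ab)) sq_nth => ac; apply: lower (enum_valP _) ac.
Qed.

Lemma colspan_subrep :
  (forall v j, j \in b -> F j = src v -> colv w j *m Mv v \in colspan b w) ->
  is_subrep (colspan b w).
Proof.
move=> closed; split.
  apply/eqP; rewrite eqEsubv; apply/andP; split; last first.
    by apply/subv_sumP => p _; exact: capvSl.
  apply/span_subvP => _ /mapP[j jb ->]; rewrite mem_enum in jb.
  rewrite memvE (sumv_sup (F j)) // -memvE memv_cap col_in_colspan //=.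
  by apply/memv_EspP => i Fi; rewrite mxE wF.
move=> v; apply/subvP => _ /memv_imgP[x /memv_capP[xV xE] ->]; rewrite lfunE /=.
rewrite -(colproj_id w_id_b (colspan_coord_injective w_id_b) (col_in_colspan w) xV).
rewrite /colproj mulmx_suml; apply: rpred_sum => j jb; rewrite -scalemxAl.
have [Fj | Fj] := eqVneq (F j) (src v); first exact/rpredZ/closed.
by rewrite (memv_EspP _ _ xE) // scale0r rpred0.
Qed.

Lemma colspan_normal_form : (forall i j, j \notin b -> w i j = 0) ->
  normal_form b (colspan b w) w.
Proof.
move=> wb; apply: normal_form_intro => //.
  exact: colspan_coord_injective.
exact: col_in_colspan.
Qed.

End ColumnSpaceCell.

Section EvaluationToCell.
Variables (b : {set 'I_d}) (ev : {ffun rel2 -> option K}).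
Hypothesis evE : in_Ev b ev.
Local Notation W := (mx_of_ev ev).

Lemma ev_mx_f_beta (k : rel2) c : f_beta b k = Some c -> W (val k).1 (val k).2 = c.
Proof. by move=> fk; rewrite mx_of_evE (evE.2 _ _ fk). Qed.

Lemma ev_mx_eq0 i j : (i \in b) && (i != j) || (j \notin b) -> W i j = 0.
Proof.
move=> ij; case h: (rel2b (i, j)); last by rewrite mx_of_ev_out ?h.
apply: (ev_mx_f_beta (k := Sub (i, j) h)); rewrite /f_beta /=.
case/orP: ij => [/andP[ib /negbTE ->] | jb]; first by rewrite ib.
by case: eqP => [-> | _]; rewrite ?(negbTE jb) ?andbF //; case: (i \in b).
Qed.

Lemma ev_mx_id_b i j : i \in b -> j \in b -> W i j = (i == j)%:R.
Proof.
move=> ib jb; have [<- | ij] := eqVneq i j; last by rewrite ev_mx_eq0 ?ib ?ij.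
have h : rel2b (i, i) by rewrite /rel2b /= eqxx leqnn.
by apply: (ev_mx_f_beta (k := Sub (i, i) h)); rewrite /f_beta /= eqxx ib.
Qed.

Lemma ev_mx_lower i j : (j < i)%N -> W i j = 0.
Proof. by move=> ji; rewrite mx_of_ev_out // /rel2b negb_and -ltnNge ji orbT. Qed.

Lemma ev_mx_F i j : F i != F j -> W i j = 0.
Proof. by move=> Fij; rewrite mx_of_ev_out // /rel2b negb_and Fij. Qed.

Hypothesis tot : total_ev ev.

Lemma ev_E_at v t s : F s = src v -> E_at W v t s = 0.
Proof.
move=> Fs; have [r3 | nr3] := boolP (rel3 v t s).
  by rewrite -Epoly_eval (total_eval_Epoly evE.1 tot r3).
exact: E_at_not_rel3 (@mx_of_ev_out ev) Fs nr3.
Qed.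

Lemma ev_col_closed v j : j \in b -> F j = src v -> colv W j *m Mv v \in colspan b W.
Proof.
move=> jb Fj; set y := _ *m _.
suff <- : colproj b W y = y by exact: colproj_in (col_in_colspan W).
rewrite colproj_mulmx => [|i k kb]; last by rewrite ev_mx_eq0 ?kb ?orbT.
apply/eqP; rewrite -subr_eq0; apply/eqP/rowP => t.
by rewrite [RHS]mxE -(ev_E_at t Fj) E_at_mulmx.
Qed.

Lemma ev_colspan_CM : in_CM b (colspan b W).
Proof.
split; last by apply: colspan_in_cell => [|i j _]; [exact: ev_mx_id_b | exact: ev_mx_lower].
apply: colspan_subrep => [|i j _|v j].
- exact: ev_mx_id_b.
- exact: ev_mx_F.
- exact: ev_col_closed.
Qed.

Lemma ev_colspan_normal_form : normal_form b (colspan b W) W.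
Proof.
apply: colspan_normal_form => [|i j _|i j _|i j jb].
- exact: ev_mx_id_b.
- exact: ev_mx_lower.
- exact: ev_mx_F.
- by rewrite ev_mx_eq0 ?jb ?orbT.
Qed.

End EvaluationToCell.

Lemma sval_inj (T : Type) (P : T -> Prop) : injective (@sval T P).
Proof. exact: eq_sig_hprop (fun x => @proof_irrelevance (P x)). Qed.

Section Bijection.
Variable beta : {set 'I_d}.
Local Notation cell_point := {V : {vspace rv} | in_CM beta V}.
Local Notation ev_pt := {ev : {ffun rel2 -> option K} | total_ev ev /\ in_Ev beta ev}.

Definition normal_form_of (N : cell_point) : 'M[K]_d :=
  proj1_sig (constructive_indefinite_description _ (normal_form_exists (svalP N))).

Lemma normal_form_ofP N : normal_form beta (sval N) (normal_form_of N).
Proof. exact: proj2_sig (constructive_indefinite_description _ _). Qed.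

Definition ev_of_point (N : cell_point) : ev_pt :=
  exist _ (ev_of_mx (normal_form_of N))
    (conj (ev_of_mx_total _) (normal_form_in_Ev (svalP N) (normal_form_ofP N))).

Definition point_of_ev (e : ev_pt) : cell_point :=
  exist _ (colspan beta (mx_of_ev (sval e)))
    (ev_colspan_CM (proj2 (svalP e)) (proj1 (svalP e))).

Lemma ev_of_point_bij : bijective ev_of_point.
Proof.
exists point_of_ev => [N | [ev [tot evE]]]; apply: sval_inj.
  have nf := normal_form_ofP N.
  rewrite /= ev_of_mxK => [|i j]; last exact: normal_form_rel2 nf.
  rewrite -(colspan_eq (normal_form_id_b nf) (cell_coord_injective (svalP N).2)) //.
  by move=> j _; apply: normal_form_col_in nf.
have injV := cell_coord_injective (ev_colspan_CM evE tot).2.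
have nf := normal_form_ofP (point_of_ev (exist _ ev (conj tot evE))).
apply/ffunP => k; rewrite /= ffunE.
rewrite (normal_form_unique injV nf (ev_colspan_normal_form evE)) mx_of_evE.
by case: (ev k) (tot k).
Qed.

End Bijection.

End Quiver.

Theorem lemma2p7 (K : fieldType) (Q0 Q1 : finType) (src tgt : Q1 -> Q0)
  (d : nat) (F : 'I_d -> Q0) (mu : Q1 -> 'I_d -> 'I_d -> K)
  (beta : {set 'I_d}) :
  (exists Phi : {V : {vspace 'rV[K]_d} | in_CM K Q0 Q1 src tgt d F mu beta V} ->
                {ev : {ffun rel2 Q0 d F -> option K} |
                   total_ev K Q0 d F ev /\ in_Ev K Q0 Q1 src tgt d F mu beta ev},
     [/\ bijective Phi,
         forall N : {V : {vspace 'rV[K]_d} | in_CM K Q0 Q1 src tgt d F mu beta V}, exists w : 'M[K]_d, normal_form K Q0 d F beta (sval N) w &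
         forall (N : {V : {vspace 'rV[K]_d} | in_CM K Q0 Q1 src tgt d F mu beta V}) (w : 'M[K]_d), normal_form K Q0 d F beta (sval N) w ->
           forall k : rel2 Q0 d F,
             sval (Phi N) k = Some (w (val k).1 (val k).2)])
  /\
  ((forall ev : {ffun rel2 Q0 d F -> option K},
      ~ in_Ev K Q0 Q1 src tgt d F mu beta ev) ->
   forall V : {vspace 'rV[K]_d}, ~ in_CM K Q0 Q1 src tgt d F mu beta V).
Proof.
split=> [|no_ev V CMV]; last first.
  have [w nf] := normal_form_exists CMV; exact: no_ev _ (normal_form_in_Ev CMV nf).
exists (@ev_of_point K Q0 Q1 src tgt d F mu beta); split.
- exact: ev_of_point_bij.
- by move=> N; exists (normal_form_of N); exact: normal_form_ofP.
- move=> N w nf k; rewrite /= ffunE.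
  by rewrite (normal_form_unique (cell_coord_injective (svalP N).2) nf (normal_form_ofP N)).
Qed.
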